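(* For parameters $r,s$, define $$B^{(r,s)}_{n,k}=\sum_{j=0}^n\binom{j}{k}\binom{n+k}{2j}s^jr^{\,n+k-2j}C_j,\qquad C_j=\tfrac1{j+1}\tbinom{2j}{j},$$ and the $(r,s)$-Borel polynomials $B^{(r,s)}_n(y)=\sum_{k=0}^nB^{(r,s)}_{n,k}y^k$. Then: (i) the $B^{(r,s)}_n(y)$ are the moments of the orthogonal polynomials whose coefficient array is the Riordan array $$\left(\frac{1+sxy}{1+(r+2sy)x+s(1+ry+sy^2)x^2},\ \frac{x}{1+(r+2sy)x+s(1+ry+sy^2)x^2}\right),$$ i.e. the first column of the inverse of this array has generating function $\sum_nB^{(r,s)}_n(y)x^n$; (ii) the generating function $B^{(r,s)}(x,y)=\sum_{n,k}B^{(r,s)}_{n,k}x^ny^k$ has the Jacobi continued fraction expansion $$B^{(r,s)}(x,y)=\cfrac{1}{1-(r+sy)x-\cfrac{(s+rsy+s^2y^2)x^2}{1-(r+2sy)x-\cfrac{(s+rsy+s^2y^2)x^2}{1-(r+2sy)x-\cdots}}}.$$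
   Context: A Riordan array $(g(x),f(x))$ is the lower-triangular matrix with $(n,k)$ entry $[x^n]g(x)f(x)^k$; the moments of the associated orthogonal polynomials are the entries of the first column of its inverse matrix. Continued fractions are interpreted as formal power series limits of convergents. Binomial coefficients with lower index out of range vanish. *)

From HB Require Import structures.
From mathcomp Require Import all_boot all_order all_algebra.
Set Implicit Arguments. Unset Strict Implicit. Unset Printing Implicit Defensive.
Import Order.TTheory GRing.Theory Num.Theory.
Local Open Scope ring_scope.

Section FPS.
Variable R : comRingType.

Definition fps := nat -> R.

Definition fps_of_seq (c : seq R) : fps := fun n => nth 0 c n.

Definition fps1 : fps := fun n => (n == 0%N)%:R.

Definition fps_mul (a b : fps) : fps :=
  fun n => \sum_(i < n.+1) a i * b (n - i)%N.

Definition fps_pow (a : fps) (k : nat) : fps := iter k (fps_mul a) fps1.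

(* Multiplicative inverse of a series whose constant term is 1:
   b_0 = 1, b_n = - \sum_{i=1}^n a_i b_{n-i}.  (Only used on series with
   constant term 1.) *)
Fixpoint fps_inv_seq (a : fps) (n : nat) : seq R :=
  match n with
  | 0 => [:: 1]
  | n'.+1 => let s := fps_inv_seq a n' in
             rcons s (- \sum_(j < n'.+1) a j.+1 * nth 0 s (n' - j)%N)
  end.

Definition fps_inv (a : fps) : fps := fun n => nth 0 (fps_inv_seq a n) n.

Definition fps_div (a b : fps) : fps := fps_mul a (fps_inv b).

Definition riordan (g f : fps) (n k : nat) : R := fps_mul g (fps_pow f k) n.

(* Convergents of the Jacobi continued fraction
   1/(1 - b_0 x - a_1 x^2/(1 - b_1 x - a_2 x^2/(1 - ...))):
   jfrac_level b a m i = F_i with F_m = 1 and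
   F_i = 1 / (1 - b_i x - a_{i+1} x^2 F_{i+1}). *)
Fixpoint jfrac_from (b a : nat -> R) (d i : nat) : fps :=
  match d with
  | 0 => fps1
  | d'.+1 =>
      fps_inv (fun n => (n == 0%N)%:R - (n == 1%N)%:R * b i
                        - fps_mul (fps_of_seq [:: 0; 0; a i.+1])
                                  (jfrac_from b a d' i.+1) n)
  end.

Definition jfrac_conv (b a : nat -> R) (m : nat) : fps := jfrac_from b a m 0.

End FPS.

Definition catalan (j : nat) : nat := 'C(j.*2, j) %/ j.+1.

Section Borel.
Variable R : comRingType.
Variables r s : R.

Definition borel_coef (n k : nat) : R :=
  \sum_(j < n.+1) ('C(j, k) * 'C(n + k, j.*2) * catalan j)%:R
                   * s ^+ j * r ^+ (n + k - j.*2).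

Definition borel_poly (y : R) (n : nat) : R :=
  \sum_(k < n.+1) borel_coef n k * y ^+ k.

Definition borel_den (y : R) : fps R :=
  fps_of_seq [:: 1; r + 2%:R * s * y; s * (1 + r * y + s * y ^+ 2)].

Definition borel_g (y : R) : fps R :=
  fps_div (fps_of_seq [:: 1; s * y]) (borel_den y).

Definition borel_f (y : R) : fps R :=
  fps_div (fps_of_seq [:: 0; 1]) (borel_den y).

End Borel.

From HB Require Import structures.
From mathcomp Require Import all_boot all_order all_algebra.
From mathcomp Require Import ring zify.
From Stdlib Require Import Setoid Morphisms.
Set Implicit Arguments. Unset Strict Implicit. Unset Printing Implicit Defensive.
Import GRing.Theory.

(* Write [B(x) = sum_n B_n(y) x^n].  Expanding [C_j] through the Catalan series [T]
   in [s x], [T = 1 + s x T^2], gives [B = (1 - r x)^-1 T(x (x + y) (1 - r x)^-2)],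
   hence the quadratic equation [(1 - r x) B = 1 + s x (x + y) B^2].  Both parts
   follow from it.  (ii): with [C = B / (1 - s y x B)] it yields
   [B (1 - (r + s y) x - a x^2 C) = 1] and [C (1 - (r + 2 s y) x - a x^2 C) = 1],
   and the d-th convergent agrees with these fixed points up to order [2 d].
   (i): the first column of the inverse of a Riordan array [(g, f)] is the series
   [M] with [g M(f) = 1], and here [B(f) = D / (1 + s y x) = 1 / g].
   Series identities are proved as congruences of polynomials modulo [x^N]. *)

Lemma catalan_mul n : n.+1 * catalan n = 'C(n.*2, n).
Proof.
have binS := mul_bin_left n.*2 n; rewrite -addnn addnK addnn in binS.
have le_bin : 'C(n.*2, n.+1) <= 'C(n.*2, n).
  by rewrite -(leq_pmul2l (ltn0Sn n)) binS leq_mul2r leqnSn orbT.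
have binB : 'C(n.*2, n) = n.+1 * ('C(n.*2, n) - 'C(n.*2, n.+1)).
  by rewrite mulnBr binS mulSn addnK.
by rewrite /catalan binB mulKn.
Qed.

Lemma catalan_ratio n : n.+2 * catalan n.+1 = (4 * n + 2) * catalan n.
Proof.
apply/eqP; rewrite -(eqn_pmul2l (ltn0Sn n)) catalan_mul mulnCA catalan_mul.
have binD := mul_bin_diag (n.+1).*2 n; rewrite doubleS /= in binD.
have binM := mul_bin_diag n.*2.+1 n.
have binC : 'C(n.*2.+1, n.+1) = 'C(n.*2.+1, n).
  rewrite -bin_sub; last by rewrite ltnS -addnn leq_addl.
  by congr 'C(_, _); rewrite -addnn subSS addnK.
rewrite /= binC in binM.
rewrite doubleS -binD -(eqn_pmul2l (ltn0Sn n)) mulnCA -binM; apply/eqP.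
by rewrite -addnn; ring.
Qed.

Lemma sum_ord_addrev n (F : nat -> nat) :
  \sum_(i < n.+1) (F i + F (n - i)) = 2 * \sum_(i < n.+1) F i.
Proof.
rewrite big_split /= mul2n -addnn; congr addn.
by rewrite (reindex_inj rev_ord_inj); apply: eq_bigr => i _; rewrite /= subSS subKn // -ltnS.
Qed.

Definition catalan_conv n := \sum_(i < n.+1) catalan i * catalan (n - i).

(* Weighting the convolution by i.+1 and symmetrising turns [catalan_ratio]
   into a recurrence for [catalan_conv] that [catalan n.+1] also satisfies. *)
Lemma catalan_conv_rec n :
  n.+3 * catalan_conv n.+1 = 2 * (catalan n.+1 + (2 * n + 2) * catalan_conv n).
Proof.
have weighted : n.+3 * catalan_conv n.+1
    = 2 * \sum_(i < n.+2) i.+1 * (catalan i * catalan (n.+1 - i)).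
  rewrite -(sum_ord_addrev _ (fun i => i.+1 * (catalan i * catalan (n.+1 - i)))).
  rewrite /catalan_conv big_distrr /=; apply: eq_bigr => i _.
  have le_i := leq_ord i; rewrite subKn // mulnCA [catalan (_ - _) * _]mulnC.
  by rewrite -mulnDl mulnCA; congr (_ * _); lia.
have sym : \sum_(i < n.+1) (4 * i + 2) * (catalan i * catalan (n - i))
    = (2 * n + 2) * catalan_conv n.
  apply/eqP; rewrite -(@eqn_pmul2l 2) // mulnCA.
  rewrite -(sum_ord_addrev _ (fun i => (4 * i + 2) * (catalan i * catalan (n - i)))).
  rewrite /catalan_conv mulnA big_distrr /=; apply/eqP; apply: eq_bigr => i _.
  have le_i := leq_ord i; rewrite subKn // [catalan (n - i) * _]mulnC -mulnDl.
  by congr (_ * _); lia.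
rewrite weighted big_ord_recl /= subn0 mul1n -sym; congr (2 * (_ + _)).
  by rewrite [catalan 0]/catalan bin0 divn1 mul1n.
by apply: eq_bigr => i _; rewrite /bump /= add1n subSS mulnA catalan_ratio mulnA.
Qed.

Lemma catalan_convolution n : catalan n.+1 = catalan_conv n.
Proof.
elim: n => [|n IH]; first by rewrite /catalan_conv big_ord1.
apply/eqP; rewrite -(eqn_pmul2l (ltn0Sn n.+2)) catalan_conv_rec -IH catalan_ratio.
by apply/eqP; lia.
Qed.

Local Open Scope ring_scope.

Definition eqmodX (R : comNzRingType) k (p q : {poly R}) := exists Q, p - q = 'X^k * Q.

Notation "p = q %[modX k ]" := (eqmodX k p q)
  (at level 70, q at next level, format "p  =  q  %[modX  k ]") : ring_scope.

Section EqModX.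
Variable R : comNzRingType.
Implicit Types (p q t u v : {poly R}) (k : nat).

Lemma eqmodX_refl k p : p = p %[modX k].
Proof. by exists 0; rewrite subrr mulr0. Qed.

Lemma eqmodX_sym k p q : p = q %[modX k] -> q = p %[modX k].
Proof. by case=> Q e; exists (- Q); rewrite mulrN -e opprB. Qed.

Lemma eqmodX_trans k p q t : p = q %[modX k] -> q = t %[modX k] -> p = t %[modX k].
Proof. by case=> Q1 e1 [Q2 e2]; exists (Q1 + Q2); rewrite mulrDr -e1 -e2 addrA subrK. Qed.

Lemma eqmodX_sub k p q : p = q %[modX k] <-> p - q = 0 %[modX k].
Proof. by split=> -[Q e]; exists Q; rewrite ?subr0 // -e subr0. Qed.

Lemma eqmodXD k p q p' q' :
  p = q %[modX k] -> p' = q' %[modX k] -> p + p' = q + q' %[modX k].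
Proof. by case=> Q1 e1 [Q2 e2]; exists (Q1 + Q2); rewrite mulrDr -e1 -e2; ring. Qed.

Lemma eqmodXN k p q : p = q %[modX k] -> - p = - q %[modX k].
Proof. by case=> Q e; exists (- Q); rewrite mulrN -e; ring. Qed.

Lemma eqmodXB k p q p' q' :
  p = q %[modX k] -> p' = q' %[modX k] -> p - p' = q - q' %[modX k].
Proof. by move=> e e'; apply/eqmodXD/eqmodXN. Qed.

Lemma eqmodXMl k t p q : p = q %[modX k] -> t * p = t * q %[modX k].
Proof. by case=> Q e; exists (t * Q); rewrite mulrCA -e; ring. Qed.

Lemma eqmodXMr k t p q : p = q %[modX k] -> p * t = q * t %[modX k].
Proof. by rewrite ![_ * t]mulrC; apply: eqmodXMl. Qed.

Lemma eqmodXM k p q p' q' :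
  p = q %[modX k] -> p' = q' %[modX k] -> p * p' = q * q' %[modX k].
Proof. by move=> e e'; apply: eqmodX_trans (eqmodXMr _ e) (eqmodXMl _ e'). Qed.

Lemma eqmodXX k n p q : p = q %[modX k] -> p ^+ n = q ^+ n %[modX k].
Proof.
move=> e; elim: n => [|n IH]; first exact: eqmodX_refl.
by rewrite !exprS; apply: eqmodXM.
Qed.

Lemma eqmodXZ k c p q : p = q %[modX k] -> c *: p = c *: q %[modX k].
Proof. by rewrite -!mul_polyC; apply: eqmodXMl. Qed.

Lemma eqmodX_sum k (I : Type) (rs : seq I) (F G : I -> {poly R}) :
  (forall i, F i = G i %[modX k]) ->
  \sum_(i <- rs) F i = \sum_(i <- rs) G i %[modX k].
Proof.
move=> e; elim: rs => [|i rs IH]; first by rewrite !big_nil; apply: eqmodX_refl.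
by rewrite !big_cons; apply: eqmodXD.
Qed.

Lemma eqmodX0 p q : p = q %[modX 0].
Proof. by exists (p - q); rewrite expr0 mul1r. Qed.

Lemma eqmodX_leq k k' p q : (k <= k')%N -> p = q %[modX k'] -> p = q %[modX k].
Proof. by move=> le [Q e]; exists ('X^(k' - k) * Q); rewrite e mulrA -exprD subnKC. Qed.

Lemma eqmodXP k p q : p = q %[modX k] <-> forall i, (i < k)%N -> p`_i = q`_i.
Proof.
split=> [[Q e] i lt_ik | e].
  by apply/eqP; rewrite -subr_eq0 -coefB e coefXnM lt_ik.
exists (drop_poly k (p - q)); rewrite -{1}(poly_take_drop k (p - q)) mulrC.
suff -> : take_poly k (p - q) = 0 by rewrite add0r.
apply/polyP => i; rewrite coef_take_poly coef0 coefB.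
by case: ifP => // /e ->; rewrite subrr.
Qed.

Lemma eqmodX_mulXn k j p q :
  p = q %[modX k] -> 'X^j * p = 'X^j * q %[modX k + j].
Proof. by case=> Q e; exists Q; rewrite -mulrBr e mulrA -exprD addnC. Qed.

Lemma eqmodX_Xn j p : 'X^j * p = 0 %[modX j].
Proof. by exists p; rewrite subr0. Qed.

Lemma eqmodX_comp k (P Q h : {poly R}) :
  P = Q %[modX k] -> P \Po ('X * h) = Q \Po ('X * h) %[modX k].
Proof.
case=> D e; exists (h ^+ k * (D \Po ('X * h))).
by rewrite -comp_polyB e comp_polyM comp_Xn_poly exprMn mulrA.
Qed.

Lemma eqmodX_contract k p h : p = 'X * h * p %[modX k] -> p = 0 %[modX k].
Proof.
move=> e; suff: forall j, (j <= k)%N -> p = 0 %[modX j] by apply.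
elim=> [|j IH] lt_jk; first exact: eqmodX0.
apply: eqmodX_trans (eqmodX_leq lt_jk e) _.
have [Q eQ] := IH (ltnW lt_jk); rewrite subr0 in eQ.
by exists (h * Q); rewrite subr0 eQ exprS; ring.
Qed.

Lemma eqmodX_geom k p : (1 - 'X * p) * \sum_(i < k) ('X * p) ^+ i = 1 %[modX k].
Proof.
rewrite -opprB mulNr -subrX1 opprB; apply/eqmodX_sub.
by rewrite addrAC subrr add0r exprMn -[0]oppr0; apply/eqmodXN/eqmodX_Xn.
Qed.

End EqModX.

#[global] Instance eqmodX_Equivalence (R : comNzRingType) k : Equivalence (@eqmodX R k).
Proof. by split; [exact: eqmodX_refl | exact: eqmodX_sym | exact: eqmodX_trans]. Qed.

#[global] Instance eqmodX_add_Proper (R : comNzRingType) k :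
  Proper (@eqmodX R k ==> @eqmodX R k ==> @eqmodX R k) +%R.
Proof. by move=> p q e p' q' e'; apply: eqmodXD. Qed.

#[global] Instance eqmodX_opp_Proper (R : comNzRingType) k :
  Proper (@eqmodX R k ==> @eqmodX R k) -%R.
Proof. by move=> p q e; apply: eqmodXN. Qed.

#[global] Instance eqmodX_mul_Proper (R : comNzRingType) k :
  Proper (@eqmodX R k ==> @eqmodX R k ==> @eqmodX R k) *%R.
Proof. by move=> p q e p' q' e'; apply: eqmodXM. Qed.

#[global] Instance eqmodX_exp_Proper (R : comNzRingType) k :
  Proper (@eqmodX R k ==> eq ==> @eqmodX R k) (@GRing.exp _).
Proof. by move=> p q e n _ <-; apply: eqmodXX. Qed.

#[global] Hint Resolve eqmodX_refl : core.

Section EqModXEquations.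
Variable R : comNzRingType.
Implicit Types (p q t u v w : {poly R}) (k : nat).

Lemma eqmodX_mulIr k t t' p q :
  t * t' = 1 %[modX k] -> p * t = q * t %[modX k] -> p = q %[modX k].
Proof.
move=> tt' e; rewrite -(mulr1 p) -(mulr1 q) -(eqmodXMl p tt') -(eqmodXMl q tt').
by rewrite !mulrA e.
Qed.

Lemma eqmodX_inv k p q u v :
  p * u = 1 %[modX k] -> q * v = 1 %[modX k] -> u = v %[modX k] -> p = q %[modX k].
Proof. by move=> pu qv uv; rewrite -(mulr1 p) -qv mulrCA -uv pu mulr1. Qed.

(* [P = 1 + X (u P + w P^2)] is a contraction for the [X]-adic distance. *)
Lemma eqmodX_quadratic_uniq k u w p q :
  p = 1 + 'X * (u * p + w * p ^+ 2) %[modX k] ->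
  q = 1 + 'X * (u * q + w * q ^+ 2) %[modX k] -> p = q %[modX k].
Proof.
move=> /eqmodX_sub ep /eqmodX_sub eq; apply/eqmodX_sub.
apply: (@eqmodX_contract _ _ _ (u + w * (p + q))); apply/eqmodX_sub.
have -> : p - q - 'X * (u + w * (p + q)) * (p - q)
    = (p - (1 + 'X * (u * p + w * p ^+ 2))) - (q - (1 + 'X * (u * q + w * q ^+ 2))).
  by ring.
by rewrite ep eq subrr.
Qed.

End EqModXEquations.

Section Truncation.
Variable R : comNzRingType.
Implicit Types (f g u : fps R) (N : nat).

Definition fps_trunc N f : {poly R} := \poly_(i < N) f i.

Lemma coef_fps_trunc N f i : (fps_trunc N f)`_i = if (i < N)%N then f i else 0.
Proof. exact: coef_poly. Qed.

Lemma fps_trunc_coef N f p i : fps_trunc N f = p %[modX N] -> (i < N)%N -> f i = p`_i.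
Proof. by move=> /eqmodXP e lt_iN; rewrite -e // coef_fps_trunc lt_iN. Qed.

Lemma fps_trunc_mul N f g :
  fps_trunc N (fps_mul f g) = fps_trunc N f * fps_trunc N g %[modX N].
Proof.
apply/eqmodXP => i lt_iN; rewrite coef_fps_trunc lt_iN coefM; apply: eq_bigr => j _.
rewrite !coef_fps_trunc (leq_ltn_trans (leq_ord j) lt_iN).
by rewrite (leq_ltn_trans (leq_subr _ _) lt_iN).
Qed.

Lemma fps_trunc1 N : fps_trunc N (fps1 R) = 1 %[modX N].
Proof. by apply/eqmodXP => i lt_iN; rewrite coef_fps_trunc lt_iN coef1. Qed.

Lemma fps_trunc_pow N f k : fps_trunc N (fps_pow f k) = fps_trunc N f ^+ k %[modX N].
Proof.
elim: k => [|k IH]; first exact: fps_trunc1.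
by rewrite /fps_pow iterS fps_trunc_mul -/(fps_pow f k) IH exprS.
Qed.

Lemma fps_trunc_seq N c : fps_trunc N (fps_of_seq c) = Poly c %[modX N].
Proof. by apply/eqmodXP => i lt_iN; rewrite coef_fps_trunc lt_iN coef_Poly. Qed.

Lemma size_fps_inv_seq u n : size (fps_inv_seq u n) = n.+1.
Proof. by elim: n => //= n IH; rewrite size_rcons IH. Qed.

Lemma nth_fps_inv_seq u n i : (i <= n)%N -> nth 0 (fps_inv_seq u n) i = fps_inv u i.
Proof.
elim: n => [|n IH]; first by rewrite leqn0 => /eqP ->.
rewrite leq_eqVlt => /orP[/eqP -> // | lt_in].
by rewrite /= nth_rcons size_fps_inv_seq lt_in IH.
Qed.

Lemma fps_invS u n : fps_inv u n.+1 = - \sum_(j < n.+1) u j.+1 * fps_inv u (n - j)%N.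
Proof.
rewrite {1}/fps_inv /= nth_rcons size_fps_inv_seq ltnn eqxx.
by congr (- _); apply: eq_bigr => j _; rewrite nth_fps_inv_seq // leq_subr.
Qed.

Lemma fps_trunc_inv N u : u 0%N = 1 ->
  fps_trunc N (fps_inv u) * fps_trunc N u = 1 %[modX N].
Proof.
move=> u0; rewrite mulrC -fps_trunc_mul; apply/eqmodXP => -[|n] lt_nN.
  by rewrite coef_fps_trunc lt_nN coef1 /fps_mul big_ord1 u0 mul1r.
rewrite coef_fps_trunc lt_nN coef1 /fps_mul big_ord_recl u0 mul1r fps_invS.
by rewrite addrC (eq_bigr (fun j : 'I_n.+1 => u j.+1 * fps_inv u (n - j)%N)) ?subrr.
Qed.

End Truncation.

Lemma sum_ord_widen (R : nmodType) m M (F : nat -> R) : (m <= M)%N ->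
  (forall i, (m <= i < M)%N -> F i = 0) -> \sum_(i < m) F i = \sum_(i < M) F i.
Proof.
move=> le_mM F0; rewrite (big_ord_widen _ F le_mM) big_mkcond /=.
apply: eq_bigr => i _; case: ifP => // /negbT; rewrite -leqNgt => le_mi.
by rewrite F0 // le_mi ltn_ord.
Qed.
Arguments sum_ord_widen {R m M} F.

Section BorelSeries.
Variable R : comNzRingType.
Variables (r s y : R) (N : nat).
Local Notation rX := (r%:P * 'X).

Definition borel_gf : {poly R} := \poly_(n < N) borel_poly r s y n.

(* The truncated series of [(1 - r x) ^ -(q + 1)]. *)
Definition neg_binomial q : {poly R} := \poly_(m < N) (r ^+ m * 'C(m + q, m)%:R).

Definition catalan_gf : {poly R} := \poly_(j < N) (s ^+ j * (catalan j)%:R).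

Lemma coef_1subrX_mul p i :
  ((1 - rX) * p)`_i = p`_i - (if i == 0%N then 0 else r * p`_i.-1).
Proof. by rewrite mulrBl mul1r -mulrA coefB coefCM coefXM; case: eqP; rewrite ?mulr0. Qed.

Lemma neg_binomial0 : (1 - rX) * neg_binomial 0 = 1 %[modX N].
Proof.
apply/eqmodXP => -[|i] lt_iN; rewrite coef_1subrX_mul coef1 !coef_poly lt_iN /=.
  by rewrite subr0 mulr1.
by rewrite (ltnW lt_iN) !addn0 !binn !mulr1 -exprS subrr.
Qed.

Lemma neg_binomialS q : (1 - rX) * neg_binomial q.+1 = neg_binomial q %[modX N].
Proof.
apply/eqmodXP => -[|i] lt_iN; rewrite coef_1subrX_mul !coef_poly lt_iN /=.
  by rewrite !bin0 subr0.
by rewrite (ltnW lt_iN) addSn binS addSnnS natrD exprS; ring.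
Qed.

Lemma neg_binomialX q : neg_binomial 0 ^+ q.+1 = neg_binomial q %[modX N].
Proof.
elim: q => [|q IH]; first by rewrite expr1.
by rewrite exprS IH -(neg_binomialS q) mulrA [_ * (1 - rX)]mulrC neg_binomial0 mul1r.
Qed.

Lemma catalan_gf_eq : catalan_gf = 1 + s%:P * ('X * catalan_gf ^+ 2) %[modX N].
Proof.
apply/eqmodXP => -[|j] lt_jN; rewrite coefD coef1 coefCM coefXM /catalan_gf coef_poly lt_jN /=.
  by rewrite mulr0 addr0 expr0 mul1r.
rewrite add0r expr2 coefM catalan_convolution natr_sum !big_distrr /=.
apply: eq_bigr => k _; have le_kj := leq_ord k; rewrite !coef_poly.
rewrite (leq_ltn_trans le_kj (ltnW lt_jN)) (leq_ltn_trans (leq_subr k j) (ltnW lt_jN)).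
by rewrite natrM exprS -{1}(subnKC le_kj) exprD; ring.
Qed.

Lemma coef_borel_term j n : (n < N)%N ->
  (('X * ('X + y%:P)) ^+ j * neg_binomial j.*2)`_n
  = \sum_(k < j.+1) ('C(j, k) * 'C(n + k, j.*2))%:R * r ^+ (n + k - j.*2) * y ^+ k.
Proof.
move=> lt_nN; rewrite exprMn exprDn mulr_sumr big_distrl /= coef_sum; apply: eq_bigr => k _.
have le_kj : (k <= j)%N := leq_ord k.
have -> : 'X^j * ('X^(j - k) * y%:P ^+ k *+ 'C(j, k)) * neg_binomial j.*2
    = ('C(j, k)%:R * y ^+ k)%:P * ('X^(j + (j - k)) * neg_binomial j.*2).
  by rewrite rmorphM rmorph_nat rmorphXn /= exprD -mulr_natr; ring.
rewrite coefCM coefXnM /neg_binomial coef_poly (leq_ltn_trans (leq_subr _ _) lt_nN).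
case: ltnP => [lt_n|le_n].
  by rewrite (@bin_small (n + k)) ?muln0 ?mul0r ?mulr0 //; lia.
have -> : (n - (j + (j - k)) = n + k - j.*2)%N by lia.
rewrite subnK; last by lia.
by rewrite bin_sub ?natrM; [ring | lia].
Qed.

Lemma borel_poly_sum n : (n < N)%N ->
  borel_poly r s y n = \sum_(j < N) s ^+ j * (catalan j)%:R *
    \sum_(k < j.+1) ('C(j, k) * 'C(n + k, j.*2))%:R * r ^+ (n + k - j.*2) * y ^+ k.
Proof.
move=> lt_nN; pose F j k := ('C(j, k) * 'C(n + k, j.*2) * catalan j)%:R
                           * s ^+ j * r ^+ (n + k - j.*2) * y ^+ k.
have F0 j k : (j < k)%N || (n < j)%N || (n < k)%N -> F j k = 0.
  case: (ltnP j k) => [lt_jk _ | le_kj /= lt_n]; first by rewrite /F bin_small // !mul0n !mul0r.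
  by rewrite /F (@bin_small (n + k)) ?muln0 ?mul0n ?mul0r //; lia.
transitivity (\sum_(k < N) \sum_(j < N) F j k).
  rewrite /borel_poly (sum_ord_widen (fun k => borel_coef r s n k * y ^+ k) lt_nN).
    apply: eq_bigr => k _; rewrite /borel_coef big_distrl /=.
    rewrite (sum_ord_widen (fun j => F j k) lt_nN) // => j /andP[lt_nj _].
    by rewrite F0 ?lt_nj ?orbT.
  move=> k /andP[lt_nk _]; rewrite /borel_coef big_distrl big1 //= => j _.
  by rewrite -/(F j k) F0 // lt_nk !orbT.
rewrite exchange_big /=; apply: eq_bigr => j _; rewrite big_distrr /=.
rewrite -(sum_ord_widen (F j) (ltn_ord j)) => [|k /andP[lt_jk _]]; last by rewrite F0 // lt_jk.
by apply: eq_bigr => k _; rewrite /F !natrM; ring.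
Qed.

Definition borel_catalan_arg : {poly R} := ('X + y%:P) * neg_binomial 0 ^+ 2.

Lemma borel_gf_factor :
  borel_gf = neg_binomial 0 * (catalan_gf \Po ('X * borel_catalan_arg)) %[modX N].
Proof.
rewrite comp_polyE (sum_ord_widen (fun i => catalan_gf`_i *: ('X * borel_catalan_arg) ^+ i)
  (size_poly _ _)) => [|i /andP[le_Ni _]]; last first.
  by rewrite nth_default ?scale0r // (leq_trans (size_poly _ _)).
have -> : neg_binomial 0 * \sum_(j < N) catalan_gf`_j *: ('X * borel_catalan_arg) ^+ j
    = \sum_(j < N) catalan_gf`_j *: (('X * ('X + y%:P)) ^+ j * neg_binomial 0 ^+ (j.*2).+1).
  rewrite mulr_sumr; apply: eq_bigr => j _; rewrite -scalerAr /borel_catalan_arg.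
  by rewrite [_ ^+ (j.*2).+1]exprS -mul2n exprM !exprMn; congr (_ *: _); ring.
rewrite (eqmodX_sum _ (fun j : 'I_N => eqmodXZ _ (eqmodXMl _ (neg_binomialX j.*2)))).
apply/eqmodXP => n lt_nN; rewrite coef_poly lt_nN borel_poly_sum // coef_sum.
by apply: eq_bigr => j _; rewrite coefZ coef_borel_term // coef_poly ltn_ord.
Qed.

Lemma borel_gf_eq :
  (1 - rX) * borel_gf = 1 + s%:P * ('X * ('X + y%:P) * borel_gf ^+ 2) %[modX N].
Proof.
have catalan_comp := eqmodX_comp borel_catalan_arg catalan_gf_eq.
rewrite -polyC1 comp_polyD !comp_polyM !comp_polyC comp_polyX polyC1 -expr2 in catalan_comp.
rewrite !borel_gf_factor [(1 - rX) * _]mulrA neg_binomial0 mul1r {1}catalan_comp.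
by rewrite /borel_catalan_arg exprMn !mulrA.
Qed.

End BorelSeries.

Section JFraction.
Variable R : comNzRingType.

Definition jfrac_den (c a : R) (F : fps R) : fps R := fun n =>
  (n == 0%N)%:R - (n == 1%N)%:R * c - fps_mul (fps_of_seq [:: 0; 0; a]) F n.

Lemma jfrac_den0 c a F : jfrac_den c a F 0%N = 1.
Proof. by rewrite /jfrac_den /fps_mul big_ord1 /fps_of_seq /= !mul0r !subr0. Qed.

Lemma fps_trunc_jfrac_den N c a F :
  fps_trunc N (jfrac_den c a F) = 1 - c%:P * 'X - a%:P * 'X^2 * fps_trunc N F %[modX N].
Proof.
have X2 : Poly [:: 0; 0; a] = a%:P * 'X^2.
  by apply/polyP => -[|[|[|i]]]; rewrite coef_Poly coefCM coefXn ?mulr0 ?mulr1 //= nth_nil.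
have e := fps_trunc_mul N (fps_of_seq [:: 0; 0; a]) F; rewrite fps_trunc_seq X2 in e.
apply/eqmodXP => i lt_iN; rewrite coef_fps_trunc lt_iN !coefB coef1 coefCM coefX.
by rewrite /jfrac_den (fps_trunc_coef e lt_iN) mulrC.
Qed.

Variables (b a : nat -> R) (b1 a1 : R).
Hypotheses (b_tail : forall i, b i.+1 = b1) (a_tail : forall i, a i.+1 = a1).

Lemma jfrac_fromS d i :
  jfrac_from b a d.+1 i = fps_inv (jfrac_den (b i) (a i.+1) (jfrac_from b a d i.+1)).
Proof. by []. Qed.

Lemma jfrac_from_tail d i : jfrac_from b a d i.+1 = jfrac_from b a d 1.
Proof. by elim: d i => //= d IH i; rewrite !b_tail !a_tail IH (IH 1%N). Qed.

Variables (N : nat) (B C : {poly R}).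
Hypothesis C_eq : C * (1 - b1%:P * 'X - a1%:P * 'X^2 * C) = 1 %[modX N].
Hypothesis B_eq : B * (1 - (b 0%N)%:P * 'X - a1%:P * 'X^2 * C) = 1 %[modX N].

Lemma jfrac_den_eqmodX k c F G : (k <= N)%N -> fps_trunc N F = G %[modX k - 2] ->
  fps_trunc N (jfrac_den c a1 F) = 1 - c%:P * 'X - a1%:P * 'X^2 * G %[modX k].
Proof.
move=> le_kN eFG; rewrite (eqmodX_leq le_kN (fps_trunc_jfrac_den N c a1 F)).
rewrite -![_ * 'X^2 * _]mulrA.
apply: eqmodXB => //; apply: eqmodXMl; apply: (eqmodX_leq _ (eqmodX_mulXn 2 eFG)); lia.
Qed.

Lemma jfrac_tail_eqmodX d : fps_trunc N (jfrac_from b a d 1) = C %[modX minn d.*2 N].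
Proof.
elim: d => [|d IH]; first by rewrite min0n; apply: eqmodX0.
have le_N : (minn d.+1.*2 N <= N)%N by rewrite geq_minr.
rewrite jfrac_fromS jfrac_from_tail a_tail b_tail.
apply: (eqmodX_inv (eqmodX_leq le_N (fps_trunc_inv _ (jfrac_den0 _ _ _)))).
  exact: eqmodX_leq le_N C_eq.
by apply: jfrac_den_eqmodX le_N _; apply: eqmodX_leq IH; lia.
Qed.

Lemma jfrac_conv_coef d n : (N <= d.*2.+2)%N -> (n < N)%N -> jfrac_conv b a d.+1 n = B`_n.
Proof.
move=> le_N lt_nN; apply: fps_trunc_coef lt_nN; rewrite /jfrac_conv jfrac_fromS a_tail.
apply: (eqmodX_inv (fps_trunc_inv _ (jfrac_den0 _ _ _)) B_eq).
by apply: jfrac_den_eqmodX => //; apply: eqmodX_leq (jfrac_tail_eqmodX d); lia.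
Qed.

End JFraction.

Section BorelJFraction.
Variable R : comNzRingType.
Variables (r s y : R) (N : nat).

Definition borel_jfrac_b (i : nat) : R := if i == 0%N then r + s * y else r + 2%:R * s * y.
Definition borel_jfrac_a : R := s + r * s * y + s ^+ 2 * y ^+ 2.

Local Notation B := (borel_gf r s y N).
Local Notation rP := (r%:P).
Local Notation sP := (s%:P).
Local Notation yP := (y%:P).

(* [C = B / (1 - s y x B)], the generating function of the tail fraction from level 1 on. *)
Definition borel_tail_gf : {poly R} := B * \sum_(i < N) ('X * (sP * yP * B)) ^+ i.
Local Notation C := borel_tail_gf.
Local Notation geom := (eqmodX_geom N (sP * yP * B)).

Lemma borel_jfrac_a_polyC : borel_jfrac_a%:P = sP + rP * sP * yP + sP ^+ 2 * yP ^+ 2.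
Proof. by rewrite !rmorphD !rmorphM. Qed.

Lemma borel_jfrac_eq0 :
  B * (1 - (borel_jfrac_b 0)%:P * 'X - borel_jfrac_a%:P * 'X^2 * C) = 1 %[modX N].
Proof.
have /eqmodX_sub quad := borel_gf_eq r s y N; have /eqmodX_sub geom0 := geom.
apply: (eqmodX_mulIr geom); apply/eqmodX_sub.
rewrite borel_jfrac_a_polyC /borel_jfrac_b /= rmorphD rmorphM /borel_tail_gf.
set I := \sum_(i < N) _; set a := sP + _ + _.
have -> : B * (1 - (rP + sP * yP) * 'X - a * 'X^2 * (B * I)) * (1 - 'X * (sP * yP * B))
      - 1 * (1 - 'X * (sP * yP * B))
    = ((1 - rP * 'X) * B - (1 + sP * ('X * ('X + yP) * B ^+ 2)))
      - a * 'X^2 * B ^+ 2 * ((1 - 'X * (sP * yP * B)) * I - 1).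
  by rewrite /a; ring.
by rewrite quad geom0 mulr0 subr0.
Qed.

Lemma borel_jfrac_eq1 :
  C * (1 - (borel_jfrac_b 1)%:P * 'X - borel_jfrac_a%:P * 'X^2 * C) = 1 %[modX N].
Proof.
have /eqmodX_sub eq0 := borel_jfrac_eq0; have /eqmodX_sub geom0 := geom.
apply: (eqmodX_mulIr geom); apply/eqmodX_sub.
move: eq0; set a := borel_jfrac_a%:P.
rewrite /borel_jfrac_b /= !rmorphD !rmorphM rmorph_nat /borel_tail_gf => eq0.
set I := \sum_(i < N) _.
have -> : B * I * (1 - (rP + 2%:R * sP * yP) * 'X - a * 'X^2 * (B * I))
      * (1 - 'X * (sP * yP * B)) - 1 * (1 - 'X * (sP * yP * B))
    = (B * (1 - (rP + sP * yP) * 'X - a * 'X^2 * (B * I)) - 1)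
      + B * (1 - (rP + 2%:R * sP * yP) * 'X - a * 'X^2 * (B * I))
        * ((1 - 'X * (sP * yP * B)) * I - 1).
  by ring.
by rewrite eq0 geom0 mulr0 addr0.
Qed.

Lemma borel_jfrac_coef d n : (N <= d.*2.+2)%N -> (n < N)%N ->
  jfrac_conv borel_jfrac_b (fun=> borel_jfrac_a) d.+1 n = borel_poly r s y n.
Proof.
move=> le_N lt_nN; rewrite (@jfrac_conv_coef _ _ _ (borel_jfrac_b 1) borel_jfrac_a _ _
  N B C borel_jfrac_eq1 borel_jfrac_eq0 d n le_N lt_nN) //.
by rewrite coef_poly lt_nN.
Qed.

End BorelJFraction.

Section RiordanMatrix.
Variables (R : comUnitRingType) (N : nat) (G h : {poly R}).
Hypotheses (G0 : G`_0 = 1) (h0 : h`_0 = 1).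

Definition riordan_mx : 'M[R]_N.+1 := \matrix_(i, j) (G * ('X * h) ^+ j)`_i.

Lemma riordan_mxE i j : riordan_mx i j = ('X^j * (G * h ^+ j))`_i.
Proof. by rewrite mxE exprMn mulrCA. Qed.

Lemma riordan_mx_unit : riordan_mx \in unitmx.
Proof.
rewrite unitmxE det_trig.
  rewrite big1 ?unitr1 // => i _.
  rewrite riordan_mxE coefXnM ltnn subnn -!horner_coef0 hornerM horner_exp.
  by rewrite !horner_coef0 G0 h0 expr1n mulr1.
apply/forallP => i; apply/forallP => j; apply/implyP => lt_ij.
by rewrite riordan_mxE coefXnM lt_ij.
Qed.

Lemma riordan_mx_inv_col (B : {poly R}) : (size B <= N.+1)%N ->
  G * (B \Po ('X * h)) = 1 %[modX N.+1] -> forall i, invmx riordan_mx i ord0 = B`_i.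
Proof.
move=> szB /eqmodXP eB i; set b := \col_(j < N.+1) B`_j.
have Lb : riordan_mx *m b = delta_mx ord0 0.
  apply/matrixP => i' k; rewrite !mxE (ord1 k) eqxx andbT -coef1.
  rewrite -(eB _ (ltn_ord i')) comp_polyE.
  rewrite (sum_ord_widen (fun j => B`_j *: ('X * h) ^+ j) szB) => [|j /andP[le_j _]]; last first.
    by rewrite nth_default ?scale0r.
  rewrite mulr_sumr coef_sum; apply: eq_bigr => j _.
  by rewrite !mxE -scalerAr coefZ mulrC.
have := mulKmx riordan_mx_unit b; rewrite Lb -colE => /matrixP /(_ i 0).
by rewrite !mxE.
Qed.

End RiordanMatrix.

Section BorelRiordan.
Variable R : comNzRingType.
Variables (r s y : R) (N : nat).
Local Notation rP := (r%:P).
Local Notation sP := (s%:P).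
Local Notation yP := (y%:P).

Definition borel_den_poly : {poly R} :=
  1 + (rP + 2%:R * sP * yP) * 'X + sP * (1 + rP * yP + sP * yP ^+ 2) * 'X^2.
Definition borel_den_inv : {poly R} := fps_trunc N (fps_inv (borel_den r s y)).
Local Notation D := borel_den_poly.
Local Notation Di := borel_den_inv.
Local Notation w := (1 + sP * yP * 'X).

Lemma borel_den_invP : Di * D = 1 %[modX N].
Proof.
rewrite -(fps_trunc_inv N (erefl : borel_den r s y 0%N = 1)) fps_trunc_seq (_ : Poly _ = D) //.
by rewrite /= !cons_poly_def mul0r add0r !(rmorphD, rmorphM, rmorph1, rmorph_nat) /D; ring.
Qed.

Lemma borel_g_trunc : fps_trunc N (borel_g r s y) = w * Di %[modX N].
Proof.
rewrite /borel_g /fps_div fps_trunc_mul fps_trunc_seq (_ : Poly _ = w) //.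
by rewrite /= !cons_poly_def mul0r add0r rmorphM polyC1; ring.
Qed.

Lemma borel_f_trunc : fps_trunc N (borel_f r s y) = 'X * Di %[modX N].
Proof.
rewrite /borel_f /fps_div fps_trunc_mul fps_trunc_seq (_ : Poly _ = 'X) //.
by rewrite /= !cons_poly_def mul0r add0r polyC0 polyC1; ring.
Qed.

Lemma borel_riordan_entry i j : (i < N)%N ->
  riordan (borel_g r s y) (borel_f r s y) i j = (w * Di * ('X * Di) ^+ j)`_i.
Proof.
move=> lt_iN; apply: fps_trunc_coef lt_iN.
by rewrite fps_trunc_mul fps_trunc_pow borel_g_trunc borel_f_trunc.
Qed.

Definition borel_w_inv : {poly R} := \sum_(i < N) ('X * - (sP * yP)) ^+ i.
Local Notation J := borel_w_inv.

Lemma borel_w_invP : w * J = 1 %[modX N].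
Proof. by rewrite (_ : w = 1 - 'X * - (sP * yP)); [exact: eqmodX_geom | ring]. Qed.

Lemma borel_gf_comp_eq (P := borel_gf r s y N \Po ('X * Di)) :
  P = 1 + 'X * (Di * rP * P + Di * sP * ('X * Di + yP) * P ^+ 2) %[modX N].
Proof.
have := eqmodX_comp Di (borel_gf_eq r s y N).
rewrite -polyC1 !(comp_polyB, comp_polyD, comp_polyM, comp_polyC, comp_polyX) polyC1 -/P.
move=> /eqmodX_sub eP; apply/eqmodX_sub.
by rewrite (_ : P - _ = (1 - rP * ('X * Di)) * P
                        - (1 + sP * ('X * Di * ('X * Di + yP) * (P * P)))) //; ring.
Qed.

Lemma borel_den_ratio_eq :
  D * J = 1 + 'X * (Di * rP * (D * J) + Di * sP * ('X * Di + yP) * (D * J) ^+ 2) %[modX N].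
Proof.
have ww : w ^+ 2 * J ^+ 2 = 1 %[modX N] by rewrite -exprMn borel_w_invP expr1n.
apply: (eqmodX_mulIr ww).
have -> : D * J * w ^+ 2 = D * w * (w * J) by ring.
have -> : (1 + 'X * (Di * rP * (D * J) + Di * sP * ('X * Di + yP) * (D * J) ^+ 2)) * w ^+ 2
    = w ^+ 2 + 'X * (rP * (Di * D) * w * (w * J)
                     + sP * (Di * D) * ('X * (Di * D) + yP * D) * (w * J) ^+ 2).
  by ring.
rewrite borel_w_invP borel_den_invP; apply/eqmodX_sub.
by rewrite [X in X = _ %[modX _]](_ : _ = 0) //; rewrite /D; ring.
Qed.

(* [B(x / D)] and [D / w] solve the same contracting quadratic equation. *)
Lemma borel_riordan_eq : w * Di * (borel_gf r s y N \Po ('X * Di)) = 1 %[modX N].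
Proof.
rewrite (eqmodX_quadratic_uniq (borel_gf_comp_eq) borel_den_ratio_eq).
rewrite (_ : w * Di * (D * J) = (Di * D) * (w * J)); last by ring.
by rewrite borel_den_invP borel_w_invP mulr1.
Qed.

End BorelRiordan.

Theorem mainTheorem10 (R : comUnitRingType) (r s y : R) :
  (forall N : nat,
     let L := \matrix_(i < N.+1, j < N.+1)
                riordan (borel_g r s y) (borel_f r s y) i j in
     L \in unitmx /\
     forall i : 'I_N.+1, invmx L i ord0 = borel_poly r s y i)
  /\
  (forall n : nat, exists M : nat, forall m : nat, (M <= m)%N ->
     jfrac_conv
       (fun i => if i == 0%N then r + s * y else r + 2%:R * s * y)
       (fun _ => s + r * s * y + s ^+ 2 * y ^+ 2) m n
     = borel_poly r s y n).
Proof.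
split=> [N L | n].
  pose Di := borel_den_inv r s y N.+1.
  have Di0 : Di`_0 = 1 by rewrite coef_fps_trunc.
  have G0 : ((1 + s%:P * y%:P * 'X) * Di)`_0 = 1.
    by rewrite coef0M Di0 coefD coef1 coefMX addr0 mulr1.
  have -> : L = riordan_mx N ((1 + s%:P * y%:P * 'X) * Di) Di.
    by apply/matrixP => i j; rewrite !mxE (borel_riordan_entry _ _ _ _ (ltn_ord i)).
  split=> [|i]; first exact: riordan_mx_unit.
  rewrite (riordan_mx_inv_col G0 Di0 (size_poly _ _) (borel_riordan_eq r s y N.+1)).
  by rewrite coef_poly ltn_ord.
exists n.+1 => -[|d] // le_nd.
by apply: (@borel_jfrac_coef _ _ _ _ n.+1); lia.
Qed.
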